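(* Let $M:D\to E$ be the continuous map where $D=\{x,y,z,c\}$ has open sets $\emptyset,\{x,y,z\},D$, $E=\{u,v\}$ is the two-point antidiscrete space, and $M(x)=M(y)=u$, $M(z)=M(c)=v$. Let $k:\{\bullet\}\to S$ be the map sending the point to the closed point $c$ of the Sierpinski space $S=\{o,c\}$ (open sets $\emptyset,\{o\},S$). Then, in $\mathrm{Top}$, $\{M\}^l=\{k\}^{lr}$, and this is the class of closed subspace embeddings, i.e. of closed injective continuous maps.
   Context: For continuous maps $f:A\to B$, $g:C\to D'$, $f\pitchfork g$ means: for all continuous $t:A\to C$, $b:B\to D'$ with $g\circ t=b\circ f$ there is continuous $d:B\to C$ with $d\circ f=t$, $g\circ d=b$. For a class $P$, $P^l=\{f: f\pitchfork g\ \forall g\in P\}$, $P^r=\{g: f\pitchfork g\ \forall f\in P\}$, and $P^{lr}=(P^l)^r$. *)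

From HB Require Import structures.
From mathcomp Require Import all_boot all_order all_algebra.
From mathcomp Require Import all_classical all_reals topology.
Set Implicit Arguments.
Unset Strict Implicit.
Unset Printing Implicit Defensive.
Local Open Scope classical_set_scope.

Definition chain3_op (T : Type) (U : set T) : set_system T :=
  fun A => A = set0 \/ A = U \/ A = setT.

Lemma chain3_opT (T : Type) (U : set T) : chain3_op U setT.
Proof. by right; right. Qed.

Lemma chain3_opI (T : Type) (U : set T) : setI_closed (chain3_op U).
Proof.
move=> A B [->|[->|->]] [->|[->|->]];
  rewrite ?set0I ?setI0 ?setIid ?setTI ?setIT; rewrite /chain3_op; tauto.
Qed.

Lemma chain3_op_bigU (T : Type) (U : set T) (I : Type) (f : I -> set T) :
  (forall i, chain3_op U (f i)) -> chain3_op U (\bigcup_i f i).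
Proof.
move=> hf.
have [[i fiT]|nT] := pselect (exists i, f i = setT).
  right; right; apply/seteqP; split=> // x _; exists i => //; by rewrite fiT.
have [[i fiU]|nU] := pselect (exists i, f i = U).
  right; left; apply/seteqP; split.
    move=> x [j _ fjx]; have [fj0|[fjU|fjT]] := hf j.
    - by rewrite fj0 in fjx.
    - by rewrite -fjU.
    - by exfalso; apply: nT; exists j.
  by move=> x Ux; exists i => //; rewrite fiU.
left; apply/seteqP; split=> // x [j _ fjx].
have [fj0|[fjU|fjT]] := hf j.
- by rewrite fj0 in fjx.
- by exfalso; apply: nU; exists j.
- by exfalso; apply: nT; exists j.
Qed.

Inductive Dpt := Dx | Dy | Dz | Dc.
HB.instance Definition _ := gen_eqMixin Dpt.
HB.instance Definition _ := gen_choiceMixin Dpt.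
Definition Dxyz : set Dpt := [set p | p = Dx \/ p = Dy \/ p = Dz].
HB.instance Definition _ := isOpenTopological.Build Dpt
  (@chain3_opT _ Dxyz) (@chain3_opI _ Dxyz) (@chain3_op_bigU _ Dxyz).

(* The two-point antidiscrete space E = {u,v}. *)
Inductive Ept := Eu | Ev.
HB.instance Definition _ := gen_eqMixin Ept.
HB.instance Definition _ := gen_choiceMixin Ept.
HB.instance Definition _ := isOpenTopological.Build Ept
  (@chain3_opT _ (@set0 Ept)) (@chain3_opI _ set0) (@chain3_op_bigU _ set0).

Inductive Spt := So | Sc.
HB.instance Definition _ := gen_eqMixin Spt.
HB.instance Definition _ := gen_choiceMixin Spt.
HB.instance Definition _ := isOpenTopological.Build Spt
  (@chain3_opT _ [set So]) (@chain3_opI _ [set So]) (@chain3_op_bigU _ [set So]).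

Inductive Pt := Pbullet.
HB.instance Definition _ := gen_eqMixin Pt.
HB.instance Definition _ := gen_choiceMixin Pt.
HB.instance Definition _ := isOpenTopological.Build Pt
  (@chain3_opT _ (@setT Pt)) (@chain3_opI _ setT) (@chain3_op_bigU _ setT).

Definition M (p : Dpt) : Ept :=
  match p with Dx | Dy => Eu | Dz | Dc => Ev end.

Definition k (p : Pt) : Spt := Sc.

(* Arrows of Top (as bare functions; continuity is imposed by the classes). *)
Record arrow := Arrow { dom : topologicalType; cod : topologicalType;
                        fn : dom -> cod }.
Arguments fn : clear implicits.

Definition lifts (f g : arrow) : Prop :=
  forall (t : dom f -> dom g) (b : cod f -> cod g),
    continuous t -> continuous b -> fn g \o t = b \o fn f ->
    exists d : cod f -> dom g,
      [/\ continuous d, d \o fn f = t & fn g \o d = b].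

Definition lcl (P : arrow -> Prop) : arrow -> Prop :=
  fun f => continuous (fn f) /\ forall g, P g -> lifts f g.
Definition rcl (P : arrow -> Prop) : arrow -> Prop :=
  fun g => continuous (fn g) /\ forall f, P f -> lifts f g.

Definition closed_embedding (X Y : topologicalType) (f : X -> Y) : Prop :=
  [/\ continuous f, injective f & forall A : set X, closed A -> closed (f @` A)].

From HB Require Import structures.
From mathcomp Require Import all_boot all_order all_algebra.
From mathcomp Require Import all_classical all_reals topology.
Set Implicit Arguments.
Unset Strict Implicit.
Unset Printing Implicit Defensive.
Local Open Scope classical_set_scope.

(* Lifting against [M] makes a map injective (lift the indicator of a point
   into {x, y} over the constant u) and closed (lift the indicator of a closed
   set C into {z, c} over the indicator of the range into {u, v}; the image of
   C is then the preimage of c under the lift).  Conversely a closed embedding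
   f lifts against [M] by extending t along f and sending the rest of the
   codomain to x or z according to b.
   A square against [k] only forces b to be the closed point c on the image
   of f, while a lift forces b to be c everywhere; since b^-1(o) is open, this
   holds for every b exactly when f has dense image.  A closed embedding g
   lifts against a dense map f, since b cannot leave the closed range of g,
   and g^-1 \o b is continuous because g is closed.  Conversely, lifting
   against the collapse of the discrete space bool to a point makes g
   injective, and lifting against the dense inclusion of dom g into
   dom g + {y}, topologised from g and a point y of the closure of g(C),
   puts y into g(C). *)

Lemma lcl_set1 (g f : arrow) :
  lcl (fun h => h = g) f <-> continuous (fn f) /\ lifts f g.
Proof. by split=> -[fc fg]; split=> //; [exact: fg | move=> h ->]. Qed.

Lemma continuous_chain3 (S X : topologicalType) (U : set X) (h : S -> X) :
  @open X = chain3_op U -> open (h @^-1` U) -> continuous h.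
Proof.
move=> openX hU; apply/continuousP => A; rewrite openX => -[|[|]] -> //.
- by rewrite preimage_set0; exact: open0.
- by rewrite preimage_setT; exact: openT.
Qed.

Lemma continuous_Pt (S : topologicalType) (h : S -> Pt) : continuous h.
Proof.
by apply: (continuous_chain3 (U := setT)) => //; rewrite preimage_setT; exact: openT.
Qed.

Lemma continuous_Ept (S : topologicalType) (h : S -> Ept) : continuous h.
Proof.
by apply: (continuous_chain3 (U := set0)) => //; rewrite preimage_set0; exact: open0.
Qed.

Lemma continuous_SptP (S : topologicalType) (h : S -> Spt) :
  continuous h <-> open (h @^-1` [set So]).
Proof.
split=> [/continuousP|]; first by apply; right; left.
exact: continuous_chain3.
Qed.

Lemma Dxyz_setC1 : Dxyz = ~` [set Dc].
Proof. by apply/seteqP; split=> -[] /=; rewrite /Dxyz /=; intuition discriminate. Qed.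

Lemma continuous_DptP (S : topologicalType) (h : S -> Dpt) :
  continuous h <-> closed (h @^-1` [set Dc]).
Proof.
rewrite -openC preimage_setC -Dxyz_setC1.
split=> [/continuousP|]; first by apply; right; left.
exact: continuous_chain3.
Qed.

Lemma lifts_k_dense (f : arrow) : lifts f (Arrow k) <-> dense (range (fn f)).
Proof.
split=> [liftk O [y Oy] oO | fdense t b _ bc kt_bf].
- apply: contrapT => Onf.
  pose b y := if pselect (O y) then So else Sc.
  have bc : continuous b.
    apply/continuous_SptP; suff -> : b @^-1` [set So] = O by [].
    by apply/seteqP; split=> z; rewrite /b /=; case: pselect.
  have [|d [_ _ kd]] := liftk (fun=> Pbullet) b (@continuous_Pt _ _) bc.
    apply/funext => a; rewrite /b /=; case: pselect => // Ofa.
    by case: Onf; exists (fn f a); split=> //; exists a.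
  by have := congr1 (@^~ y) kd; rewrite /b /=; case: pselect.
- exists (fun=> Pbullet); split; first exact: continuous_Pt.
    by apply/funext => a; case: (t a).
  apply/funext => y /=; case bySo: (b y) => //.
  have [z [bSo [a _ faz]]] : (b @^-1` [set So]) `&` range (fn f) !=set0.
    by apply: fdense; [exists y | exact/continuous_SptP].
  by move: bSo; rewrite /= -faz -[b _](congr1 (@^~ a) kt_bf).
Qed.

Lemma lcl_k (f : arrow) :
  lcl (fun g => g = Arrow k) f <-> continuous (fn f) /\ dense (range (fn f)).
Proof.
apply: iff_trans (lcl_set1 _ _) _.
by split=> -[fc /lifts_k_dense fd].
Qed.

Section LiftingAgainstM.
Variable f : arrow.
Hypothesis liftM : lifts f (Arrow M).

Lemma liftsM_injective : injective (fn f).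
Proof.
move=> a1 a2 fa12; apply: contrapT => a12.
pose t a := if pselect (a = a1) then Dx else Dy.
have tc : continuous t.
  apply/continuous_DptP; suff -> : t @^-1` [set Dc] = set0 by exact: closed0.
  by apply/seteqP; split=> a //=; rewrite /t; case: pselect.
have [|d [_ dt _]] := @liftM t (fun=> Eu) tc (@continuous_Ept _ _).
  by apply/funext => a; rewrite /t /=; case: pselect.
have dfE a : d (fn f a) = t a := congr1 (@^~ a) dt.
have := dfE a2; rewrite -fa12 dfE /t.
by case: pselect => // a11; case: pselect => // a21; case: a12.
Qed.

Lemma liftsM_closed (C : set (dom f)) : closed C -> closed (fn f @` C).
Proof.
move=> Ccl.
pose t a := if pselect (C a) then Dc else Dz.
pose b y := if pselect (range (fn f) y) then Ev else Eu.
have tc : continuous t.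
  apply/continuous_DptP; suff -> : t @^-1` [set Dc] = C by [].
  by apply/seteqP; split=> a; rewrite /t /=; case: pselect.
have [|d [dc dt Md]] := @liftM t b tc (@continuous_Ept _ _).
  apply/funext => a; rewrite /t /b /=.
  by case: pselect => Ca; case: pselect => // nfa; case: nfa; exact: imageT.
have dfE a : d (fn f a) = t a := congr1 (@^~ a) dt.
suff -> : fn f @` C = d @^-1` [set Dc] by exact/continuous_DptP.
apply/seteqP; split=> [_ [a Ca <-]|y /= dy].
  by rewrite /= dfE /t; case: pselect.
have : b y = Ev by rewrite -[b y](congr1 (@^~ y) Md) /= dy.
rewrite /b; case: pselect => // -[a _ fay] _.
by exists a => //; move: dy; rewrite -fay dfE /t; case: pselect.
Qed.

End LiftingAgainstM.

Lemma closed_embedding_liftsM (f : arrow) :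
  closed_embedding (fn f) -> lifts f (Arrow M).
Proof.
move=> [_ finj fcl] t b tc _ Mt_bf.
pose d y := if pselect (exists a, fn f a = y) is left fy then t (projT1 (cid fy))
            else if b y is Eu then Dx else Dz.
have dfE a : d (fn f a) = t a.
  rewrite /d; case: pselect => [fa|[]]; last by exists a.
  by case: cid => a' /= /finj ->.
exists d; split.
- apply/continuous_DptP.
  suff -> : d @^-1` [set Dc] = fn f @` (t @^-1` [set Dc]).
    by apply: fcl; exact/continuous_DptP.
  apply/seteqP; split=> [y /=|_ [a /= tc_a <-]]; last by rewrite /= dfE.
  rewrite /d; case: pselect => [fy|_]; last by case: (b y).
  by case: cid => a /= <- ta; exists a.
- exact/funext/dfE.
- apply/funext => y /=; rewrite /d; case: pselect => [fy|_]; last by case: (b y).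
  by case: cid => a /= <-; have := congr1 (@^~ a) Mt_bf.
Qed.

Lemma lcl_M (f : arrow) :
  lcl (fun g => g = Arrow M) f <-> closed_embedding (fn f).
Proof.
apply: iff_trans (lcl_set1 _ _) _; split=> [[fc liftM]|fce].
  by split; [| exact: liftsM_injective | exact: liftsM_closed].
by split; [case: fce | exact: closed_embedding_liftsM].
Qed.

Lemma closed_embedding_lifts_dense (f g : arrow) :
  closed_embedding (fn g) -> dense (range (fn f)) -> lifts f g.
Proof.
move=> [_ ginj gcl] fdense t b _ bc gt_bf.
have gtE a : fn g (t a) = b (fn f a) := congr1 (@^~ a) gt_bf.
have bg y : exists x, fn g x = b y.
  apply: contrapT => nbg.
  have [z [bz [a _ faz]]] : (b @^-1` ~` range (fn g)) `&` range (fn f) !=set0.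
    apply: fdense; first by exists y => -[x _ gx]; apply: nbg; exists x.
    apply: (proj1 (continuousP _) bc); apply: closed_openC; apply: gcl.
    exact: closedT.
  by apply: bz; rewrite -faz -gtE; exact: imageT.
pose d y := projT1 (cid (bg y)).
have gdE y : fn g (d y) = b y := projT2 (cid (bg y)).
exists d; split.
- apply/continuousP => O oO.
  suff -> : d @^-1` O = b @^-1` ~` (fn g @` ~` O).
    apply: (proj1 (continuousP _) bc); apply: closed_openC; apply: gcl.
    exact: open_closedC.
  apply/seteqP; split=> [y Ody [x nOx]|y nbgy].
    by rewrite -gdE => /ginj xE; apply: nOx; rewrite xE.
  by apply: contrapT => nOdy; apply: nbgy; exists (d y).
- by apply/funext => a; apply: ginj; rewrite /= gdE gtE.
- exact/funext/gdE.
Qed.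

Section RightLiftingAgainstDense.
Variable g : arrow.
Hypothesis gc : continuous (fn g).
Hypothesis lifts_dense :
  forall f : arrow, continuous (fn f) -> dense (range (fn f)) -> lifts f g.

Lemma lifts_dense_injective : injective (fn g).
Proof.
move=> x1 x2 gx12.
pose t (w : bool) := if w then x1 else x2.
have [|||||d [_ dt _]] :=
  @lifts_dense (@Arrow bool Pt (fun=> Pbullet)) _ _ t (fun=> fn g x1).
- exact: continuous_Pt.
- by move=> O [[] Op] _; exists Pbullet; split=> //; exists true.
- by apply/continuousP => A _; exact: discrete_open.
- exact: cst_continuous.
- by apply/funext => -[] /=.
by move: (congr1 (@^~ true) dt) (congr1 (@^~ false) dt) => /= <- <-.
Qed.

Lemma lifts_dense_closed (C : set (dom g)) : closed C -> closed (fn g @` C).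
Proof.
move=> Ccl y Cy.
have meetC V : open V -> V y -> exists2 c, C c & V (fn g c).
  move=> oV Vy; have [_ [[c Cc <-] Vgc]] := Cy V (open_nbhs_nbhs (conj oV Vy)).
  by exists c.
pose b (o : option (dom g)) := if o is Some x then fn g x else y.
pose f := @Arrow (dom g) (initial_topology b) Some.
have [|||||d [dc dt gd]] := @lifts_dense f _ _ id b.
- by apply/continuousP => _ [V oV <-]; exact: (proj1 (continuousP _) gc).
- move=> W [o Wo] [V oV bVW]; rewrite -bVW in Wo *.
  case: o Wo => [x Vgx|Vy]; first by exists (Some x); split=> //; exists x.
  by have [c _ Vgc] := meetC V oV Vy; exists (Some c); split=> //; exists c.
- by apply/continuousP => A.
- exact: initial_continuous.
- by [].
have dE x : d (Some x) = x := congr1 (@^~ x) dt.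
have CdN : C (d None).
  apply: contrapT => nC.
  have [V oV bV] := proj1 (continuousP _) dc _ (closed_openC Ccl).
  have [c Cc Vgc] : exists2 c, C c & V (fn g c).
    by apply: meetC => //; have : (b @^-1` V) None by rewrite bV.
  have : (b @^-1` V) (Some c) by [].
  by rewrite bV /= dE.
by exists (d None) => //; exact: (congr1 (@^~ None) gd).
Qed.

End RightLiftingAgainstDense.

Lemma rcl_lcl_k (g : arrow) :
  rcl (lcl (fun h => h = Arrow k)) g <-> closed_embedding (fn g).
Proof.
split=> [[gc liftk]|gce].
  have lifts_dense f : continuous (fn f) -> dense (range (fn f)) -> lifts f g.
    by move=> fc fd; apply: liftk; exact/lcl_k.
  split=> //; [exact: lifts_dense_injective | exact: lifts_dense_closed].
split; first by case: gce.
by move=> f /lcl_k[_ fd]; exact: closed_embedding_lifts_dense.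
Qed.

Theorem mainTheorem6 :
  (forall f : arrow, lcl (fun g => g = Arrow M) f <-> rcl (lcl (fun g => g = Arrow k)) f) /\
  (forall f : arrow, rcl (lcl (fun g => g = Arrow k)) f <-> closed_embedding (fn f)).
Proof.
split=> f; last exact: rcl_lcl_k.
exact: iff_trans (lcl_M f) (iff_sym (rcl_lcl_k f)).
Qed.
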